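(* Let $M$ be a matroid on $E=\{0,\dots,n\}$ with dual matroid $M^\perp$. Then $\operatorname{crem}[\mathcal S_M]=[\mathcal Q_{M^\perp}^\vee]$ and $\operatorname{crem}[\mathcal Q_M]=[\mathcal S_{M^\perp}^\vee]$ in $K_T^0(X_E)$. In particular $\operatorname{crem}\, c(\mathcal S_M,u)=c(\mathcal Q_{M^\perp}^\vee,u)$ and $\operatorname{crem}\, c(\mathcal Q_M,u)=c(\mathcal S_{M^\perp}^\vee,u)$.
   Context: $X_E$ is the permutohedral variety (toric variety of the fan $\Sigma_E$ in $\mathbb R^E/\mathbb R\mathbf 1$ with cones $\operatorname{Cone}(\overline{\mathbf e}_{S_1},\dots,\overline{\mathbf e}_{S_k})$ for chains of nonempty proper subsets), with $T=(\mathbb C^* )^E$-fixed points $p_\sigma$ indexed by permutations $\sigma$ ($p_\sigma$ corresponds to the chain $S_i=\{\sigma(0),\dots,\sigma(i-1)\}$); $K_T^0(X_E)$ embeds in $\prod_\sigma\mathbb Z[T_0^{\pm1},\dots,T_n^{\pm1}]$ by restriction $[\mathcal E]\mapsto([\mathcal E]_\sigma)$. $B_\sigma(M)$ is the lexicographically first basis for the order $\sigma(0)\prec\cdots\prec\sigma(n)$; $[\mathcal S_M]_\sigma=\sum_{i\in B_\sigma(M)}T_i^{-1}$, $[\mathcal Q_M]_\sigma=\sum_{i\notin B_\sigma(M)}T_i^{-1}$; $\vee$ is the dual ($T_i\mapsto T_i^{-1}$), $c(\cdot,u)$ the non-equivariant Chern polynomial. The Cremona involution $\operatorname{crem}:X_E\to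 X_E$ is the toric morphism induced by $x\mapsto -x$ on $\Sigma_E$ (with $t\mapsto t^{-1}$ on tori); it acts on $K_T^0(X_E)$ by $(\operatorname{crem}[\mathcal E])_\sigma=[\mathcal E]_{\overline\sigma}(T_0^{-1},\dots,T_n^{-1})$ where $\overline\sigma(i)=\sigma(n-i)$, and on Chow rings by pullback ($=$ pushforward). *)

From HB Require Import structures.
From mathcomp Require Import all_boot all_order all_algebra all_fingroup.
From mathcomp Require Import freeg mpoly.

Set Implicit Arguments.
Unset Strict Implicit.
Unset Printing Implicit Defensive.

Import Order.TTheory GRing.Theory Num.Theory.
Local Open Scope ring_scope.

(* Ground set E = {0, ..., n}  is  'I_n.+1.                               *)

Definition is_matroid (T : finType) (bases : {set {set T}}) : Prop :=
  bases != set0 /\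
  forall B1 B2, B1 \in bases -> B2 \in bases ->
    forall x, x \in B1 :\: B2 ->
      exists2 y, y \in B2 :\: B1 & (y |: (B1 :\ x)) \in bases.

Definition dual_bases (T : finType) (bases : {set {set T}}) : {set {set T}} :=
  [set ~: B | B in bases].

(* B is the lexicographically first basis for the total order
   sigma(0) < sigma(1) < ... < sigma(n): for every other basis B',
   at the first position k (in the sigma-order) where B and B' differ,
   the element sigma(k) belongs to B. *)
Definition is_lexfirst n (bases : {set {set 'I_n.+1}}) (s : {perm 'I_n.+1})
    (B : {set 'I_n.+1}) : bool :=
  (B \in bases) &&
  [forall B' in bases, (B' != B) ==>
     [exists k : 'I_n.+1,
        [&& s k \in B, s k \notin B' &
            [forall j : 'I_n.+1, (j < k)%N ==> ((s j \in B) == (s j \in B'))]]]].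

(* B_sigma(M) (the empty set if M has no basis, which does not happen for a
   matroid). *)
Definition lexfirst n (bases : {set {set 'I_n.+1}}) (s : {perm 'I_n.+1})
    : {set 'I_n.+1} :=
  odflt set0 [pick B | is_lexfirst bases s B].

(* sigma-bar : i |-> sigma(n - i). Note (p * q) x = q (p x) for perms. *)
Definition rev_perm n : {perm 'I_n.+1} := perm (@rev_ord_inj n.+1).
Definition sbar n (s : {perm 'I_n.+1}) : {perm 'I_n.+1} := rev_perm n * s.

(* Characters of T = (C^* )^E : exponent vectors a, i.e. T^a = prod T_i^{a_i}. *)
(* Z[T_0^{+-1},...,T_n^{+-1}] as the free abelian group on characters.    *)

Definition char n := {ffun 'I_n.+1 -> int}.
Definition char_inv n (a : char n) : char n := [ffun i => - a i].
Definition Tinv n (i : 'I_n.+1) : char n := [ffun j => - ((j == i)%:R : int)].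

Definition laurent n := {freeg (char n) / int}.

Definition laurent_inv n (f : laurent n) : laurent n :=
  @fglift int (laurent n) (char n) (fun a : char n => (<< char_inv a >> : laurent n)) f.

(* Elements of prod_sigma Z[T^{+-1}] (containing K_T^0(X_E)). *)
Definition Kfam n := {perm 'I_n.+1} -> laurent n.

Definition cremK n (F : Kfam n) : Kfam n := fun s => laurent_inv (F (sbar s)).

(* T-equivariant (split) vector bundles through their fixed-point data:   *)
(* at each p_sigma the fibre is a T-representation = list of characters. *)

Definition tbundle n := {perm 'I_n.+1} -> seq (char n).

Definition Kclass n (V : tbundle n) : Kfam n :=
  fun s => \sum_(a <- V s) (<< a >> : laurent n).

Definition dualB n (V : tbundle n) : tbundle n :=
  fun s => [seq char_inv a | a <- V s].

Definition bundleS n (bases : {set {set 'I_n.+1}}) : tbundle n :=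
  fun s => [seq Tinv i | i <- enum (lexfirst bases s)].
Definition bundleQ n (bases : {set {set 'I_n.+1}}) : tbundle n :=
  fun s => [seq Tinv i | i <- enum (~: lexfirst bases s)].

(* Equivariant Chow ring A_T^*(X_E) inside prod_sigma Z[t_0,...,t_n], and *)
(* the equivariant Chern polynomial c^T(V,u) (polynomials in u).          *)

Definition Afam n := {perm 'I_n.+1} -> {poly {mpoly int[n.+1]}}.

Definition c1 n (a : char n) : {mpoly int[n.+1]} :=
  \sum_(i < n.+1) (a i)%:MP * 'X_i.

Definition chernT n (V : tbundle n) : Afam n :=
  fun s => \prod_(a <- V s) (1 + (c1 a)%:P * 'X).

Definition neg_vars n (p : {mpoly int[n.+1]}) : {mpoly int[n.+1]} :=
  p \mPo [tuple - 'X_i | i < n.+1].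

Definition cremA n (f : Afam n) : Afam n :=
  fun s => map_poly (@neg_vars n) (f (sbar s)).

From Stdlib Require Import FunctionalExtensionality.
From HB Require Import structures.
From mathcomp Require Import all_boot all_order all_algebra all_fingroup.
From mathcomp Require Import freeg mpoly.
From mathcomp Require Import zify.

Set Implicit Arguments.
Unset Strict Implicit.
Unset Printing Implicit Defensive.

(* The fixed-point data of S_M, Q_M at p_sigma are read off the basis
   B_sigma(M), so the theorem reduces to B_sigma(M^perp) = E \ B_sigmabar(M).
   Let B be lex-first for the reversed order sigmabar.  Its complement is
   lex-first among the complements of bases for sigma: otherwise some basis B'
   first differs from B (in the sigma order) at an element x of B \ B'; basis
   exchange gives y in B' \ B with B - x + y a basis, and y comes after x for
   sigma, hence before x for sigmabar, so B - x + y beats B for sigmabar.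
   Conjugating T_i to T_i^-1 (t_i to -t_i) then dualises the bundles. *)

Fixpoint bits_val (f : nat -> bool) (m : nat) : nat :=
  if m is m'.+1 then (bits_val f m').*2 + f m' else 0.

Lemma eq_bits_val (f g : nat -> bool) m :
  (forall j, j < m -> f j = g j) -> bits_val f m = bits_val g m.
Proof.
elim: m => [//|m IHm] eq_fg /=.
by rewrite IHm ?eq_fg // => j /ltnW; apply: eq_fg.
Qed.

Lemma bits_val_ltn (f g : nat -> bool) k m :
  k < m -> (forall j, j < k -> f j = g j) -> ~~ f k -> g k ->
  bits_val f m < bits_val g m.
Proof.
move=> lt_km eq_fg fk gk; elim: m lt_km => [//|m IHm] /=.
rewrite ltnS leq_eqVlt => /predU1P[<- | /IHm lt_fg].
  by rewrite (negbTE fk) gk (eq_bits_val eq_fg) -!addnn; lia.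
by rewrite -!addnn; case: (f m); case: (g m) => /=; lia.
Qed.

Section LexFirst.
Variable n : nat.
Implicit Types (s t : {perm 'I_n.+1}) (B : {set 'I_n.+1}).
Implicit Types bases : {set {set 'I_n.+1}}.

Lemma exists_first_diff s B B' : B != B' ->
  exists k : 'I_n.+1, ((s k \in B) != (s k \in B')) /\
    forall j : 'I_n.+1, (j < k)%N -> (s j \in B) = (s j \in B').
Proof.
move=> neqB.
have [x diff_x] : exists x, (x \in B) != (x \in B').
  apply/existsP; apply: contraR neqB => /existsPn same.
  by apply/eqP/setP => x; apply/eqP/negPn/same.
have ex_diff : exists j, (j < n.+1) && ((s (inord j) \in B) != (s (inord j) \in B')).
  by exists (s^-1 x)%g; rewrite ltn_ord inord_val permKV.
case: (ex_minnP ex_diff) => k /andP[lt_kn diff_k] min_k.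
have kE : inord k = Ordinal lt_kn by apply: val_inj; rewrite /= inordK.
exists (Ordinal lt_kn); split; first by rewrite -kE.
move=> j lt_jk; apply/eqP; apply: contraTT lt_jk => diff_j; rewrite -leqNgt.
by apply: min_k; rewrite ltn_ord inord_val.
Qed.

(* The lexicographic order for sigma is the order of the binary numbers whose
   k-th most significant bit says whether sigma(k) lies in the set. *)
Definition lex_weight s B := bits_val (fun j => s (inord j) \in B) n.+1.

Lemma lex_weight_ltn s B B' (k : 'I_n.+1) :
  s k \notin B -> s k \in B' ->
  (forall j : 'I_n.+1, (j < k)%N -> (s j \in B) = (s j \in B')) ->
  (lex_weight s B < lex_weight s B')%N.
Proof.
move=> kB kB' agree; apply: (@bits_val_ltn _ _ k); rewrite ?inord_val //.
move=> j lt_jk; have lt_jn := ltn_trans lt_jk (ltn_ord k).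
have -> : inord j = Ordinal lt_jn by apply: val_inj; rewrite /= inordK.
exact: agree.
Qed.

Lemma exists_is_lexfirst bases s : bases != set0 -> exists B, is_lexfirst bases s B.
Proof.
case/set0Pn => B0 B0_basis.
case: (@arg_maxnP _ B0 (mem bases) (lex_weight s) B0_basis) => B B_basis max_B.
exists B; apply/andP; split => //; apply/forall_inP => B' B'_basis.
apply/implyP; rewrite eq_sym => neqB.
have [k [diff_k agree]] := exists_first_diff s neqB.
move: diff_k; case kB: (s k \in B); case kB': (s k \in B') => // _.
  apply/existsP; exists k; rewrite kB kB' /=.
  by apply/forallP => j; apply/implyP => /agree ->.
by have /= := max_B B' B'_basis; rewrite leqNgt (@lex_weight_ltn s B B' k) ?kB.
Qed.

Lemma is_lexfirst_uniq bases s B1 B2 :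
  is_lexfirst bases s B1 -> is_lexfirst bases s B2 -> B1 = B2.
Proof.
case/andP=> B1_basis /forall_inP lex1; case/andP=> B2_basis /forall_inP lex2.
apply/eqP; apply/negPn/negP => neqB.
have /implyP/(_ neqB)/existsP[k2 /and3P[in2 out1 /forallP agree2]] := lex2 B1 B1_basis.
rewrite eq_sym in neqB.
have /implyP/(_ neqB)/existsP[k1 /and3P[in1 out2 /forallP agree1]] := lex1 B2 B2_basis.
case: (ltngtP k1 k2) => [lt12 | lt21 | /val_inj eq12].
- by move: (agree2 k1); rewrite lt12 in1 (negbTE out2).
- by move: (agree1 k2); rewrite lt21 in2 (negbTE out1).
- by move: in1; rewrite eq12 (negbTE out1).
Qed.

Lemma lexfirstE bases s B : is_lexfirst bases s B -> lexfirst bases s = B.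
Proof.
move=> lexB; rewrite /lexfirst; case: pickP => [B' lexB' | no_lexfirst] /=.
  exact: is_lexfirst_uniq lexB' lexB.
by move: (no_lexfirst B); rewrite lexB.
Qed.

Lemma is_lexfirst_exchange bases t B x y :
  is_lexfirst bases t B -> x \in B -> y \notin B -> y |: (B :\ x) \in bases ->
  ((t^-1)%g x < (t^-1)%g y)%N.
Proof.
case/andP=> _ /forall_inP lexB xB yB exch_basis.
have neqB : y |: (B :\ x) != B by apply: contraNneq yB => <-; rewrite setU11.
have /implyP/(_ neqB)/existsP[m /and3P[mB mB' /forallP agree]] := lexB _ exch_basis.
have tmE : t m = x.
  by apply/eqP; move: mB'; rewrite !inE mB andbT negb_or negbK => /andP[_].
rewrite -tmE permK ltn_neqAle leqNgt; apply/andP; split.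
  by apply: contraNneq yB => /val_inj mE; rewrite -(permKV t y) -mE tmE.
apply/negP => lt_ym; move: (agree ((t^-1)%g y)).
by rewrite lt_ym permKV (negbTE yB) setU11.
Qed.

Lemma sbarE s (m : 'I_n.+1) : sbar s m = s (rev_ord m).
Proof. by rewrite /sbar permM /rev_perm permE. Qed.

Lemma sbarVE s x : ((sbar s)^-1)%g x = rev_ord ((s^-1)%g x).
Proof. by apply: (perm_inj (s := sbar s)); rewrite permKV sbarE rev_ordK permKV. Qed.

Lemma is_lexfirst_dual bases s B : is_matroid bases ->
  is_lexfirst bases (sbar s) B -> is_lexfirst (dual_bases bases) s (~: B).
Proof.
move=> [_ exch] lexB; have /andP[B_basis _] := lexB.
apply/andP; split; first exact: imset_f.
apply/forall_inP => _ /imsetP[B' B'_basis ->]; apply/implyP => neqC.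
have neqB : B != B' by apply: contraNneq neqC => ->.
have [k [diff_k agree]] := exists_first_diff s neqB.
apply/existsP; exists k; rewrite !inE.
move: diff_k; case kB: (s k \in B); case kB': (s k \in B') => // _; last first.
  by apply/forallP => j; apply/implyP => /agree; rewrite !inE => ->.
have kBB' : s k \in B :\: B' by rewrite inE kB kB'.
have [y /setDP[yB' yB] exch_basis] := exch B B' B_basis B'_basis _ kBB'.
have := is_lexfirst_exchange lexB kB yB exch_basis.
rewrite !sbarVE permK /= => lt_rev.
have lt_yk : ((s^-1)%g y < k)%N.
  by have := ltn_ord k; have := ltn_ord ((s^-1)%g y); lia.
by move: (agree _ lt_yk); rewrite permKV (negbTE yB) yB'.
Qed.

Lemma lexfirst_dual_bases bases s : is_matroid bases ->
  lexfirst (dual_bases bases) s = ~: lexfirst bases (sbar s).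
Proof.
move=> M; have [B lexB] := exists_is_lexfirst (sbar s) (proj1 M).
by rewrite (lexfirstE lexB); apply/lexfirstE/is_lexfirst_dual.
Qed.

End LexFirst.

Import GRing.Theory.
Local Open Scope ring_scope.

Section Bundles.
Variable n : nat.
Implicit Types (V : tbundle n) (bases : {set {set 'I_n.+1}}).

HB.instance Definition _ := GRing.isZmodMorphism.Build (laurent n) (laurent n)
  (@laurent_inv n) (lift_is_additive _).

Lemma laurent_invU (a : char n) : laurent_inv << a >> = << char_inv a >>.
Proof. by rewrite /laurent_inv liftU scale1r. Qed.

HB.instance Definition _ :=
  GRing.RMorphism.copy (@neg_vars n) (comp_mpoly [tuple - 'X_i | i < n.+1]).

Lemma neg_vars_c1 (a : char n) : neg_vars (c1 a) = c1 (char_inv a).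
Proof.
rewrite /neg_vars /c1 raddf_sum; apply: eq_bigr => i _.
rewrite !mul_mpolyC /= comp_mpolyZ comp_mpolyXU -tnth_nth tnth_mktuple ffunE.
by rewrite scalerN scaleNr.
Qed.

Lemma cremK_Kclass V : cremK (Kclass V) = Kclass (dualB (V \o @sbar n)).
Proof.
apply: functional_extensionality => s.
rewrite /cremK /Kclass /dualB big_map raddf_sum.
apply: eq_bigr => a _; exact: laurent_invU.
Qed.

Lemma cremA_chernT V : cremA (chernT V) = chernT (dualB (V \o @sbar n)).
Proof.
apply: functional_extensionality => s; rewrite /cremA /chernT /dualB big_map.
rewrite rmorph_prod; apply: eq_bigr => a _.
by rewrite rmorphD rmorph1 rmorphM /= map_polyC map_polyX -neg_vars_c1.
Qed.

Lemma bundleS_sbar bases : is_matroid bases ->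
  bundleS bases \o @sbar n = bundleQ (dual_bases bases).
Proof.
move=> M; apply: functional_extensionality => s.
by rewrite /= /bundleQ lexfirst_dual_bases ?setCK.
Qed.

Lemma bundleQ_sbar bases : is_matroid bases ->
  bundleQ bases \o @sbar n = bundleS (dual_bases bases).
Proof.
move=> M; apply: functional_extensionality => s.
by rewrite /= /bundleS lexfirst_dual_bases.
Qed.

End Bundles.

Theorem proposition5p11 (n : nat) (bases : {set {set 'I_n.+1}}) :
  is_matroid bases ->
  [/\ cremK (Kclass (bundleS bases)) = Kclass (dualB (bundleQ (dual_bases bases))),
      cremK (Kclass (bundleQ bases)) = Kclass (dualB (bundleS (dual_bases bases))),
      cremA (chernT (bundleS bases)) = chernT (dualB (bundleQ (dual_bases bases)))
    & cremA (chernT (bundleQ bases)) = chernT (dualB (bundleS (dual_bases bases)))].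
Proof.
by move=> M; rewrite !cremK_Kclass !cremA_chernT bundleS_sbar // bundleQ_sbar.
Qed.
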